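(* Let $p,q\in\mathbf{R}_+^n$, $K_0\in\mathbf{R}_+$, $w\in\mathbf{R}_{++}^n$ and $K=(K_1,\dots,K_n)$ with $K_i\in\mathbf{R}_+$, such that $0\le p_i<q_i\le p_i+K_i$ for $i=1,\dots,n$. Consider the problem \[ \begin{array}{ll} \mbox{maximize} & \mathbf{E}_{\pi}(w^{T}x-K_0)_+ \\ \mbox{subject to} & \mathbf{E}_{\pi}(x_i)=q_i,\\ & \mathbf{E}_{\pi}(x_i-K_i)_+=p_i,\quad i=1,\dots,n, \end{array} \] over all probability measures $\pi$ supported on $\mathbf{R}_+^n$ (the asset price vector $x$ having law $\pi$). Then the optimal value of this problem is bounded above by \[ d^{\sup}=\max_{0\le j\le n+1}\; w^{T}p+\sum_{i=1}^n w_i\min(q_i-p_i,\beta_jK_i)-\beta_jK_0, \] where $\beta_j:=(q_j-p_j)/K_j\in[0,1]$ for $j=1,\dots,n$, $\beta_0=0$ and $\beta_{n+1}=1$.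
   Context: $(y)_+=\max(y,0)$. $\mathbf{R}_{++}^n$ denotes vectors with strictly positive components. *)

From HB Require Import structures.
From mathcomp Require Import all_boot all_order all_algebra.
From mathcomp Require Import all_classical all_reals all_analysis.
Set Implicit Arguments. Unset Strict Implicit. Unset Printing Implicit Defensive.
Import Order.TTheory GRing.Theory Num.Theory.
Local Open Scope ring_scope.

Definition pospart (R : realType) (y : R) : R := Num.max y 0.

(* beta_j for j = 0..n+1 :  beta_0 = 0, beta_{n+1} = 1,
   beta_j = (q_j - p_j)/K_j for 1 <= j <= n (vectors indexed from 0). *)
Definition beta (R : realType) (n : nat) (p q K : 'I_n -> R) (j : 'I_n.+2) : R :=
  if (j : nat) == 0%N then 0
  else match (insub (j.-1) : option 'I_n) with
       | Some i => (q i - p i) / K i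
       | None => 1
       end.

Definition dterm (R : realType) (n : nat) (p q K w : 'I_n -> R) (K0 : R)
  (j : 'I_n.+2) : R :=
  \sum_(i < n) w i * p i
  + \sum_(i < n) w i * Num.min (q i - p i) (beta p q K j * K i)
  - beta p q K j * K0.

Definition dsup (R : realType) (n : nat) (p q K w : 'I_n -> R) (K0 : R) : R :=
  \big[Num.max/dterm p q K w K0 ord0]_(j < n.+2) dterm p q K w K0 j.

(* Let A be the event that the basket w^T x exceeds K0, and y := P(A).
   Splitting x_i = min(x_i, K_i) + (x_i - K_i)_+ gives the pointwise bound
     (w^T x - K0)_+ + 1_A K0
       <= sum_i w_i (x_i - K_i)_+ + 1_A sum_i w_i min(x_i, K_i),
   while E[1_A min(x_i, K_i)] <= min(E[min(x_i, K_i)], y K_i)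
                              = min(q_i - p_i, y K_i).
   Taking expectations bounds the objective by
     d(y) = w^T p + sum_i w_i min(q_i - p_i, y K_i) - y K0,   0 <= y <= 1.
   The kinks of d lie among the beta_j, so d is affine between the two beta_j
   adjacent to y, and d(y) is dominated by d at one of them, chosen according
   to the sign of the slope of d at y. *)

From HB Require Import structures.
From mathcomp Require Import all_boot all_order all_algebra.
From mathcomp Require Import all_classical all_reals all_analysis.
From mathcomp Require Import measurable_realfun.
From mathcomp Require Import lra ring.
Import Order.TTheory GRing.Theory Num.Theory.
Set Implicit Arguments.
Unset Strict Implicit.
Unset Printing Implicit Defensive.
Local Open Scope ring_scope.

Section DualBound.
Variables (R : realType) (n : nat) (p q K w : 'I_n -> R) (K0 : R).

Definition dfun (y : R) : R :=
  \sum_(i < n) w i * p i + \sum_(i < n) w i * Num.min (q i - p i) (y * K i)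
  - y * K0.

Definition dslope (y : R) : R :=
  \sum_(i < n) (if y * K i < q i - p i then w i * K i else 0) - K0.

Lemma dtermE j : dterm p q K w K0 j = dfun (beta p q K j).
Proof. by []. Qed.

Lemma dterm_le_dsup j : dterm p q K w K0 j <= dsup p q K w K0.
Proof. exact: (le_bigmax_cond _ (P := xpredT)). Qed.

Lemma beta_ord0 : beta p q K ord0 = 0.
Proof. by []. Qed.

Lemma beta_ord_max : beta p q K ord_max = 1.
Proof. by rewrite /beta /= insubF // ltnn. Qed.

Lemma beta_inord (i : 'I_n) : beta p q K (inord i.+1) = (q i - p i) / K i.
Proof. by rewrite /beta inordK ?ltnS 1?ltnW //= valK. Qed.

Lemma dfunB y z :
    (forall i, y * K i < q i - p i -> z * K i <= q i - p i) ->
    (forall i, q i - p i <= y * K i -> q i - p i <= z * K i) ->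
  dfun z - dfun y = (z - y) * dslope y.
Proof.
move=> below above; rewrite /dfun /dslope.
have -> : \sum_(i < n) w i * Num.min (q i - p i) (z * K i) =
    \sum_(i < n) w i * Num.min (q i - p i) (y * K i) +
    (z - y) * \sum_(i < n) (if y * K i < q i - p i then w i * K i else 0).
  rewrite mulr_sumr -big_split /=; apply: eq_bigr => i _.
  case: ifPn => [yKi|]; first by rewrite !min_r ?below ?ltW //; ring.
  rewrite -leNgt => qpi.
  by rewrite !min_l ?above // mulr0 addr0.
ring.
Qed.

Hypothesis K_gt0 : forall i, 0 < K i.

Lemma dfun_le_dsup_up y :
  y <= 1 -> 0 <= dslope y -> dfun y <= dsup p q K w K0.
Proof.
move=> y_le1 slope_ge0.
have y_le_max : y <= beta p q K ord_max by rewrite beta_ord_max.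
have [j /= y_le_b b_min] :=
  arg_minP (beta p q K) (P := fun j => y <= beta p q K j) y_le_max.
apply: le_trans (dterm_le_dsup j); rewrite dtermE -subr_ge0 dfunB.
- by rewrite mulr_ge0 // subr_ge0.
- move=> i yKi; rewrite -ler_pdivlMr // -beta_inord; apply: b_min.
  by rewrite beta_inord ler_pdivlMr // ltW.
- by move=> i /le_trans; apply; rewrite ler_wpM2r // ltW.
Qed.

Lemma dfun_le_dsup_down y :
  0 <= y -> dslope y <= 0 -> dfun y <= dsup p q K w K0.
Proof.
move=> y_ge0 slope_le0.
have min_le_y : beta p q K ord0 <= y by rewrite beta_ord0.
have [j /= b_le_y b_max] :=
  arg_maxP (beta p q K) (P := fun j => beta p q K j <= y) min_le_y.
apply: le_trans (dterm_le_dsup j); rewrite dtermE -subr_ge0 dfunB.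
- by rewrite mulr_le0 // subr_le0.
- by move=> i /ltW; apply: le_trans; rewrite ler_wpM2r // ltW.
- move=> i qpi; rewrite -ler_pdivrMr // -beta_inord; apply: b_max.
  by rewrite beta_inord ler_pdivrMr.
Qed.

Lemma dfun_le_dsup y : 0 <= y <= 1 -> dfun y <= dsup p q K w K0.
Proof.
case/andP=> y_ge0 y_le1.
have [slope_le0|slope_gt0] := lerP (dslope y) 0.
  exact: dfun_le_dsup_down.
by rewrite dfun_le_dsup_up // ltW.
Qed.

End DualBound.

Section Pospart.
Variable R : realType.

Lemma pospart_ge0 (y : R) : 0 <= pospart y.
Proof. by rewrite /pospart le_max lexx orbT. Qed.

Lemma minr_add_pospart (y k : R) : Num.min y k + pospart (y - k) = y.
Proof.
rewrite /pospart; have [yk|ky] := leP y k.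
  by rewrite max_r ?subr_le0 // addr0.
by rewrite max_l ?subr_ge0 ?ltW // addrC subrK.
Qed.

Lemma pospart_wsum_sub_le (I : finType) (w y k : I -> R) (k0 : R) :
    (forall i, 0 <= w i) ->
  pospart (\sum_i w i * y i - k0) + (k0 < \sum_i w i * y i)%R%:R * k0 <=
  \sum_i w i * pospart (y i - k i) +
  \sum_i w i * ((k0 < \sum_i w i * y i)%R%:R * Num.min (y i) (k i)).
Proof.
move=> w_ge0; case: (boolP (k0 < _)) => [k0_lt|]; last rewrite -leNgt => sum_le.
  rewrite /(pospart (_ - _)) max_l ?subr_ge0 ?(ltW k0_lt) // mulr1n mul1r subrK.
  rewrite -big_split /=; apply: ler_sum => i _.
  by rewrite mul1r -mulrDr addrC minr_add_pospart.
rewrite /(pospart (_ - _)) max_r ?subr_le0 // mul0r addr0.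
rewrite [X in _ + X]big1 => [|i _]; last by rewrite mul0r mulr0.
by rewrite addr0 sumr_ge0 // => i _; rewrite mulr_ge0 ?pospart_ge0.
Qed.

End Pospart.

Section IntegralFacts.
Local Open Scope ereal_scope.
Context d (T : measurableType d) (R : realType).
Variable mu : {measure set T -> \bar R}.

Lemma measurable_pospartB (f : T -> R) (k : R) :
  measurable_fun setT f -> measurable_fun setT (fun t => pospart (f t - k)).
Proof. by move=> mf; apply: measurable_maxr => //; exact: measurable_funB. Qed.

Lemma integral_indicMr (A : set T) (k : R) : measurable A -> (0 <= k)%R ->
  \int[mu]_t (\1_A t * k)%:E = mu A * k%:E.
Proof.
move=> mA k_ge0; under eq_integral do rewrite EFinM.
rewrite ge0_integralZr ?integral_indic ?setIT //.
exact/measurable_EFinP/measurable_indic.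
Qed.

Lemma integral_indicM_le_bound (A : set T) (f : T -> R) (k : R) :
    measurable A -> measurable_fun setT f -> (0 <= k)%R ->
    (forall t, 0 <= f t)%R -> (forall t, f t <= k)%R ->
  \int[mu]_t (\1_A t * f t)%:E <= mu A * k%:E.
Proof.
move=> mA mf k_ge0 f_ge0 f_le; rewrite -integral_indicMr //.
apply: ge0_le_integral => //.
- by move=> t _; rewrite lee_fin indicE mulr_ge0.
- exact/measurable_EFinP/measurable_funM.
- by apply/measurable_EFinP/measurable_funM.
- by move=> t _; rewrite lee_fin indicE ler_wpM2l.
Qed.

Lemma integral_indicM_le (A : set T) (f : T -> R) :
    measurable A -> measurable_fun setT f -> (forall t, 0 <= f t)%R ->
  \int[mu]_t (\1_A t * f t)%:E <= \int[mu]_t (f t)%:E.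
Proof.
move=> mA mf f_ge0; apply: ge0_le_integral => //.
- by move=> t _; rewrite lee_fin indicE mulr_ge0.
- exact/measurable_EFinP/measurable_funM.
- exact/measurable_EFinP.
- by move=> t _; rewrite lee_fin indicE ler_piMl // lern1 leq_b1.
Qed.

Lemma integral_minr (f : T -> R) (k a b : R) :
    measurable_fun setT f -> (forall t, 0 <= f t)%R -> (0 <= k)%R ->
    \int[mu]_t (f t)%:E = a%:E -> \int[mu]_t (pospart (f t - k))%:E = b%:E ->
  \int[mu]_t (Num.min (f t) k)%:E = (a - b)%:E.
Proof.
move=> mf f_ge0 k_ge0 int_f int_pos.
have : \int[mu]_t (Num.min (f t) k)%:E + b%:E = a%:E.
  rewrite -int_f -int_pos -ge0_integralD //.
  - by apply: eq_integral => t _; rewrite -EFinD minr_add_pospart.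
  - by move=> t _; rewrite lee_fin le_min f_ge0.
  - by apply/measurable_EFinP/measurable_minr.
  - by move=> t _; rewrite lee_fin pospart_ge0.
  exact/measurable_EFinP/measurable_pospartB.
by rewrite EFinB => <-; rewrite addeK.
Qed.

Lemma ge0_integral_sumZl (I : finType) (c : I -> R) (f : I -> T -> R) :
    (forall i, 0 <= c i)%R -> (forall i, measurable_fun setT (f i)) ->
    (forall i t, 0 <= f i t)%R ->
  \int[mu]_t (\sum_i c i * f i t)%:E = \sum_i (c i)%:E * \int[mu]_t (f i t)%:E.
Proof.
move=> c_ge0 mf f_ge0; under eq_integral do rewrite -sumEFin.
rewrite ge0_integral_sum //.
- apply: eq_bigr => i _; under eq_integral do rewrite EFinM.
  rewrite ge0_integralZl ?lee_fin //; first exact/measurable_EFinP.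
  by move=> t _; rewrite lee_fin.
- by move=> i; apply/measurable_EFinP/measurable_funM.
- by move=> i t _; rewrite lee_fin mulr_ge0.
Qed.

End IntegralFacts.

Section Payoff.
Local Open Scope classical_set_scope.
Local Open Scope ereal_scope.
Context d (T : measurableType d) (R : realType) (P : probability T R).
Variables (n : nat) (p q K w : 'I_n -> R) (K0 : R) (x : 'I_n -> T -> R).
Hypotheses (w_ge0 : forall i, (0 <= w i)%R) (K_ge0 : forall i, (0 <= K i)%R).
Hypotheses (K0_ge0 : (0 <= K0)%R) (x_ge0 : forall i t, (0 <= x i t)%R).
Hypothesis x_meas : forall i, measurable_fun setT (x i).
Hypothesis int_x : forall i, \int[P]_t (x i t)%:E = (q i)%:E.
Hypothesis int_pospart :
  forall i, \int[P]_t (pospart (x i t - K i))%:E = (p i)%:E.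

Let basket t := (\sum_(i < n) w i * x i t)%R.
Let in_money := [set t | (K0 < basket t)%R].

Let measurable_wsum (f : 'I_n -> T -> R) :
  (forall i, measurable_fun setT (f i)) ->
  measurable_fun setT (fun t => \sum_i w i * f i t)%R.
Proof. by move=> mf; apply: measurable_sum => i; apply: measurable_funM. Qed.

Let measurable_in_money : measurable in_money.
Proof.
rewrite (_ : in_money = setT `&` basket @^-1` `]K0, +oo[)%classic.
  exact: measurable_wsum.
by rewrite setTI; apply/seteqP; split => t /=; rewrite in_itv /= andbT.
Qed.

Let measurable_cap i : measurable_fun setT (fun t => Num.min (x i t) (K i)).
Proof. exact: measurable_minr. Qed.

Let cap_ge0 i t : (0 <= Num.min (x i t) (K i))%R.
Proof. by rewrite le_min x_ge0 K_ge0. Qed.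

Let measurable_in_money_cap i :
  measurable_fun setT (fun t => \1_in_money t * Num.min (x i t) (K i))%R.
Proof. exact: measurable_funM. Qed.

Let measurable_pospart i : measurable_fun setT (fun t => pospart (x i t - K i)).
Proof. exact: measurable_pospartB. Qed.

Let measurable_payoff : measurable_fun setT (fun t => pospart (basket t - K0)).
Proof. exact/measurable_pospartB/measurable_wsum. Qed.

Lemma integral_payoff_add_le :
  \int[P]_t (pospart (basket t - K0))%:E + P in_money * K0%:E <=
  (\sum_i w i * p i)%:E +
  \sum_i (w i)%:E * \int[P]_t (\1_in_money t * Num.min (x i t) (K i))%:E.
Proof.
have ind_ge0 t : (0 <= \1_in_money t :> R)%R by rewrite indicE.
rewrite -integral_indicMr // -ge0_integralD //; first last.
- by apply/measurable_EFinP/measurable_funM.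
- by move=> t _; rewrite lee_fin mulr_ge0.
- exact/measurable_EFinP.
- by move=> t _; rewrite lee_fin pospart_ge0.
apply: (@le_trans _ _ (\int[P]_t (\sum_i w i * pospart (x i t - K i) +
    \sum_i w i * (\1_in_money t * Num.min (x i t) (K i)))%:E)).
  apply: ge0_le_integral => //.
  - by move=> t _; rewrite -EFinD lee_fin addr_ge0 ?mulr_ge0 ?pospart_ge0.
  - by apply/measurable_EFinP/measurable_funD => //; exact: measurable_funM.
  - by apply/measurable_EFinP/measurable_funD; exact: measurable_wsum.
  move=> t _; rewrite -EFinD lee_fin indicE.
  by rewrite (mem_setE (fun t => K0 < basket t)%R) pospart_wsum_sub_le.
under eq_integral do rewrite EFinD.
rewrite ge0_integralD //.
- rewrite !ge0_integral_sumZl //.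
  + by under eq_bigr do rewrite int_pospart -EFinM; rewrite sumEFin.
  + by move=> i t; rewrite mulr_ge0 ?ind_ge0 ?cap_ge0.
  + by move=> i t; rewrite pospart_ge0.
- move=> t _; rewrite lee_fin sumr_ge0 // => i _.
  by rewrite mulr_ge0 ?pospart_ge0.
- exact/measurable_EFinP/measurable_wsum.
- move=> t _; rewrite lee_fin sumr_ge0 // => i _.
  by rewrite !mulr_ge0 ?ind_ge0 ?cap_ge0.
- exact/measurable_EFinP/measurable_wsum.
Qed.

Let P_in_moneyE : P in_money = (fine (P in_money))%:E.
Proof. by rewrite fineK // fin_num_measure. Qed.

Lemma integral_in_money_cap_le i :
  \int[P]_t (\1_in_money t * Num.min (x i t) (K i))%:E <=
  (Num.min (q i - p i) (fine (P in_money) * K i))%:E.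
Proof.
rewrite EFin_min le_min EFinM -P_in_moneyE integral_indicM_le_bound //=.
- by rewrite -(integral_minr _ _ _ (int_x i) (int_pospart i))
    // integral_indicM_le.
- by move=> t; rewrite ge_min lexx orbT.
Qed.

Lemma expected_payoff_le_dfun :
  exists2 y, (0 <= y <= 1)%R &
  \int[P]_t (pospart (basket t - K0))%:E <= (dfun p q K w K0 y)%:E.
Proof.
exists (fine (P in_money)).
  rewrite -!lee_fin -P_in_moneyE probability_le1 // andbT.
  exact: measure_ge0.
rewrite /dfun EFinB leeBrDr // EFinM -P_in_moneyE.
apply: le_trans integral_payoff_add_le _.
rewrite EFinD leeD2l // -sumEFin; apply: lee_sum => i _.
by rewrite EFinM lee_wpmul2l ?lee_fin ?integral_in_money_cap_le.
Qed.

End Payoff.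

Theorem proposition4 (R : realType) (n : nat)
  (p q K w : 'I_n -> R) (K0 : R)
  (hp : forall i, 0 <= p i) (hq : forall i, 0 <= q i)
  (hK0 : 0 <= K0) (hK : forall i, 0 <= K i) (hw : forall i, 0 < w i)
  (hpq : forall i, p i < q i) (hqK : forall i, q i <= p i + K i)
  (d : measure_display) (T : measurableType d) (P : probability T R)
  (x : 'I_n -> T -> R)
  (xmeas : forall i, measurable_fun setT (x i))
  (xpos : forall i t, 0 <= x i t)
  (hEq : forall i, (\int[P]_t (x i t)%:E = (q i)%:E)%E)
  (hEc : forall i, (\int[P]_t (pospart (x i t - K i))%:E = (p i)%:E)%E) :
  (\int[P]_t (pospart (\sum_(i < n) w i * x i t - K0))%:E
     <= (dsup p q K w K0)%:E)%E.
Proof.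
have K_gt0 i : 0 < K i by have := hpq i; have := hqK i; lra.
have [y y01 payoff_le] :=
  expected_payoff_le_dfun (fun i => ltW (hw i)) hK hK0 xpos xmeas hEq hEc.
by apply: le_trans payoff_le _; rewrite lee_fin dfun_le_dsup.
Qed.
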